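(* Let $\alpha>-1$ and for integers $0\le j\le k$ define $$a_{k,j}=(-1)^{k-j}\binom{k}{j}\frac{\Gamma(2\alpha+k+j+2)\Gamma(2\alpha+k+2)\Gamma(\alpha+k+1)}{\Gamma(2\alpha+2k+2)\Gamma(2\alpha+j+2)\Gamma(\alpha+j+1)},\quad \hat a_{k,j}=(-1)^{k-j}\binom{k}{j}\frac{\Gamma(2\alpha+k+j+2)\Gamma(2\alpha+k+2)\Gamma(\alpha+k+2)}{\Gamma(2\alpha+2k+2)\Gamma(2\alpha+j+2)\Gamma(\alpha+j+2)}.$$ Define for $k\in\mathbb{N}$ and $0\le i\le k$ the numbers $b_{k,i}$, $\hat b_{k,i}$ recursively by $b_{k,0}=\hat b_{k,0}=1$, $b_{k,i}=-\sum_{j=0}^{i-1}b_{k,j}a_{k-j,k-i}$, $\hat b_{k,i}=-\sum_{j=0}^{i-1}\hat b_{k,j}\hat a_{k-j,k-i}$. Then for all $0\le j\le k$, $$b_{k,j}=\binom{k}{j}\frac{\Gamma(2\alpha+k+2)\Gamma(\alpha+k+1)\Gamma(2\alpha+2k+3-2j)}{\Gamma(2\alpha+k+2-j)\Gamma(\alpha+k+1-j)\Gamma(2\alpha+2k+3-j)},\qquad \hat b_{k,j}=\binom{k}{j}\frac{\Gamma(2\alpha+k+2)\Gamma(\alpha+k+2)\Gamma(2\alpha+2k+3-2j)}{\Gamma(2\alpha+k+2-j)\Gamma(\alpha+k+2-j)\Gamma(2\alpha+2k+3-j)}.$$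
   Context: The numbers $a_{k,j}$ and $\hat a_{k,j}$ are the coefficients of $x^j$ in the monic Cauchy–Laguerre biorthogonal polynomials $p_k(x)$, $q_k(y)$ associated with the weight $x^{\alpha}y^{\alpha+1}e^{-x-y}/(x+y)$ on $(0,\infty)^2$. *)

From Stdlib Require Import Reals.
From Coquelicot Require Import Coquelicot.
Open Scope R_scope.

(* Euler's Gamma function, defined (as usual for Re x > 0) by the improper
   integral  Gamma x = \int_0^\infty t^(x-1) e^(-t) dt.
   All Gamma arguments in the theorem are > 0 under alpha > -1. *)
Definition Gamma (x : R) : R :=
  RInt_gen (fun t => Rpower t (x - 1) * exp (- t))
           (at_right 0) (Rbar_locally p_infty).

Definition a_coef (alpha : R) (k j : nat) : R :=
  (-1) ^ (k - j) * Binomial.C k j *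
  (Gamma (2 * alpha + INR k + INR j + 2) * Gamma (2 * alpha + INR k + 2)
     * Gamma (alpha + INR k + 1))
  / (Gamma (2 * alpha + 2 * INR k + 2) * Gamma (2 * alpha + INR j + 2)
     * Gamma (alpha + INR j + 1)).

Definition ahat_coef (alpha : R) (k j : nat) : R :=
  (-1) ^ (k - j) * Binomial.C k j *
  (Gamma (2 * alpha + INR k + INR j + 2) * Gamma (2 * alpha + INR k + 2)
     * Gamma (alpha + INR k + 2))
  / (Gamma (2 * alpha + 2 * INR k + 2) * Gamma (2 * alpha + INR j + 2)
     * Gamma (alpha + INR j + 2)).

(* The recursion b_{k,0} = 1, b_{k,i} = - sum_{j=0}^{i-1} b_{k,j} c_{k-j,k-i}
   (for 1 <= i <= k), with c = a or c = \hat a.  sum_f_R0 f n = f 0 + ... + f n. *)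
Definition satisfies_rec (c : nat -> nat -> R) (b : nat -> nat -> R) : Prop :=
  forall k : nat,
    b k 0%nat = 1 /\
    forall i : nat, (S i <= k)%nat ->
      b k (S i) = - sum_f_R0 (fun j => b k j * c (k - j)%nat (k - S i)%nat) i.

(* Since a_{m,m} = 1, the recursion says sum_{j <= n} b_{k,j} a_{k-j,k-n} = 0 for
   1 <= n <= k; it determines b, so it suffices to check the claimed closed form.  After the
   cancellations permitted by Gamma (y + 1) = y Gamma y, the j-th term of that sum is a
   factor independent of j times
     (-1)^(n-j) C(n,j) (x + n - 2j) / ((x - j)(x - j + 1)...(x - j + n)),
   x = 2 alpha + 2k + 2 - n, and these terms telescope to 0 for n >= 1.  The functional
   equation and the positivity of Gamma are derived from its integral definition:
   integration by parts on (0, oo) gives the former. *)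

From Stdlib Require Import Reals Lra Lia Wf_nat Classical.
From Coquelicot Require Import Coquelicot.
Open Scope R_scope.

Section NonnegativeIntegrand.

Variable f : R -> R.
Hypothesis f_nonneg : forall t, 0 < t -> 0 <= f t.
Hypothesis f_integrable : forall a b, 0 < a -> 0 < b -> ex_RInt f a b.

Lemma RInt_nonneg_mono a b c d :
  0 < a -> a <= b -> b <= c -> c <= d -> RInt f b c <= RInt f a d.
Proof.
  intros Ha Hab Hbc Hcd.
  assert (Hpos : forall u v, 0 < u -> u <= v -> 0 <= RInt f u v).
  { intros u v Hu Huv. apply RInt_ge_0; [lra | apply f_integrable; lra |].
    intros t Ht. apply f_nonneg. lra. }
  rewrite <- (RInt_Chasles f a b d), <- (RInt_Chasles f b c d)
    by (apply f_integrable; lra).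
  unfold plus; simpl.
  pose proof (Hpos a b Ha Hab). pose proof (Hpos c d ltac:(lra) Hcd). lra.
Qed.

Lemma is_RInt_gen_nonneg_bounded (B : R) :
  (forall e M, 0 < e <= 1 -> 1 <= M -> RInt f e M <= B) ->
  exists l, is_RInt_gen f (at_right 0) (Rbar_locally p_infty) l /\
            forall e M, 0 < e <= 1 -> 1 <= M -> RInt f e M <= l.
Proof.
  intros HB.
  set (S := fun y => exists e M, 0 < e <= 1 /\ 1 <= M /\ y = RInt f e M).
  destruct (completeness S) as [l [Hub Hlub]].
  { exists B. intros y (e & M & He & HM & ->). auto. }
  { exists (RInt f 1 1), 1, 1. repeat split; lra. }
  assert (Happrox : forall eps, 0 < eps -> exists e0 M0, 0 < e0 <= 1 /\ 1 <= M0 /\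
            forall e M, 0 < e <= e0 -> M0 <= M -> Rabs (RInt f e M - l) < eps).
  { intros eps Heps.
    destruct (classic (exists e0 M0, 0 < e0 <= 1 /\ 1 <= M0 /\ l - eps < RInt f e0 M0))
      as [(e0 & M0 & He0 & HM0 & Hclose) | Hfar].
    - exists e0, M0. repeat split; try lra. intros e M He HM.
      assert (RInt f e0 M0 <= RInt f e M) by (apply RInt_nonneg_mono; lra).
      assert (RInt f e M <= l) by (apply Hub; exists e, M; repeat split; lra).
      apply Rabs_def1; lra.
    - exfalso. enough (l <= l - eps) by lra. apply Hlub.
      intros y (e & M & He & HM & ->). apply Rnot_lt_le. intros Hlt.
      apply Hfar. exists e, M. repeat split; lra. }
  exists l. split.
  - intros P [eps HP].
    destruct (Happrox eps (cond_pos eps)) as (e0 & M0 & He0 & HM0 & Hclose).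
    apply Filter_prod with (Q := fun e => 0 < e < e0) (R := fun M => M0 < M).
    + assert (He0' : 0 < e0) by lra. exists (mkposreal e0 He0'). intros t Ht Htpos.
      unfold ball in Ht; simpl in Ht; unfold AbsRing_ball, abs, minus, plus, opp in Ht.
      simpl in Ht.
      rewrite Ropp_0, Rplus_0_r, Rabs_right in Ht by lra. lra.
    + exists M0. auto.
    + intros e M He HM. exists (RInt f e M). split.
      * apply (@RInt_correct R_CompleteNormedModule), f_integrable; lra.
      * apply HP. unfold ball; simpl; unfold AbsRing_ball, abs, minus, plus, opp; simpl.
        apply Hclose; lra.
  - intros e M He HM. apply Hub. exists e, M. auto.
Qed.

End NonnegativeIntegrand.

Lemma RInt_le_antiderivative (f g G : R -> R) a b :
  a <= b -> ex_RInt f a b ->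
  (forall t, a <= t <= b -> is_derive G t (g t)) ->
  (forall t, a <= t <= b -> continuous g t) ->
  (forall t, a < t < b -> f t <= g t) ->
  RInt f a b <= G b - G a.
Proof.
  intros Hab Hf HG Hg Hfg.
  assert (HgG : is_RInt g a b (G b - G a)).
  { apply (is_RInt_derive G g); rewrite Rmin_left, Rmax_right by lra; auto. }
  rewrite <- (is_RInt_unique _ _ _ _ HgG).
  apply RInt_le; auto. eexists; eauto.
Qed.

Lemma is_RInt_gen_derive_0_p_infty (f F : R -> R) (la lb : R) :
  (forall t, 0 < t -> is_derive F t (f t)) ->
  (forall t, 0 < t -> continuous f t) ->
  filterlim F (at_right 0) (locally la) ->
  filterlim F (Rbar_locally p_infty) (locally lb) ->
  is_RInt_gen f (at_right 0) (Rbar_locally p_infty) (lb - la).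
Proof.
  intros HF Hf Hla Hlb.
  assert (HD : forall t, 0 < t -> Derive F t = f t).
  { intros t Ht. apply is_derive_unique. auto. }
  assert (HDc : forall t, 0 < t -> continuous (Derive F) t).
  { intros t Ht. apply continuous_ext_loc with f; auto.
    exists (mkposreal t Ht). intros u Hu. symmetry. apply HD.
    unfold ball in Hu; simpl in Hu; unfold AbsRing_ball, abs, minus, plus, opp in Hu.
    simpl in Hu.
    apply Rabs_def2 in Hu. lra. }
  assert (Hpos : filter_prod (at_right 0) (Rbar_locally p_infty)
                   (fun ab => forall t, Rmin (fst ab) (snd ab) <= t -> 0 < t)).
  { apply Filter_prod with (Q := fun a => 0 < a) (R := fun b => 0 < b).
    - exists (mkposreal 1 Rlt_0_1). auto.
    - exists 0. auto.
    - intros a b Ha Hb t Ht. simpl in Ht.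
      assert (0 < Rmin a b) by (apply Rmin_glb_lt; lra). lra. }
  apply is_RInt_gen_ext with (Derive F).
  - apply filter_imp with (2 := Hpos). intros ab Hab t Ht. apply HD, Hab. lra.
  - apply is_RInt_gen_Derive; auto.
    + apply filter_imp with (2 := Hpos). intros ab Hab t Ht. exists (f t). apply HF, Hab. lra.
    + apply filter_imp with (2 := Hpos). intros ab Hab t Ht. apply HDc, Hab. lra.
Qed.

Lemma filterlim_exp_m_infty {T : Type} (F : (T -> Prop) -> Prop) {FF : Filter F} (g : T -> R) :
  filterlim g F (Rbar_locally m_infty) -> filterlim (fun t => exp (g t)) F (locally 0).
Proof. intros Hg. eapply filterlim_comp; [exact Hg | exact is_lim_exp_m]. Qed.

Lemma exp_le_compat x y : x <= y -> exp x <= exp y.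
Proof. intros [Hlt | <-]; [left; apply exp_increasing |]; lra. Qed.

Lemma mul_ln_le x t : 0 < x -> 0 < t -> x * ln t <= t / 2 + x * (ln (2 * x) - 1).
Proof.
  intros Hx Ht.
  assert (Hu : 0 < t / (2 * x)) by (apply Rdiv_lt_0_compat; lra).
  assert (Hln : ln (t / (2 * x)) <= t / (2 * x) - 1).
  { pose proof (exp_ineq1_le (ln (t / (2 * x)))). rewrite exp_ln in * by exact Hu. lra. }
  rewrite ln_div in Hln by lra.
  apply Rmult_le_compat_l with (r := x) in Hln; [|lra].
  replace (x * (t / (2 * x) - 1)) with (t / 2 - x) in Hln by (field; lra). lra.
Qed.

Lemma lim_mul_ln_minus_at_0 x : 0 < x ->
  filterlim (fun t => x * ln t - t) (at_right 0) (Rbar_locally m_infty).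
Proof.
  intros Hx P [N HN].
  assert (Hln : at_right 0 (fun t => ln t < N / x)).
  { apply (is_lim_ln_0 (fun y => y < N / x)). exists (N / x). auto. }
  assert (Hpos : at_right 0 (fun t => 0 < t)) by (exists (mkposreal 1 Rlt_0_1); auto).
  apply filter_imp with (2 := filter_and _ _ Hln Hpos). intros t [Ht Htpos]. apply HN.
  apply Rmult_lt_compat_l with (r := x) in Ht; [| lra].
  replace (x * (N / x)) with N in Ht by (field; lra). lra.
Qed.

Lemma lim_mul_ln_minus_at_p_infty x : 0 < x ->
  filterlim (fun t => x * ln t - t) (Rbar_locally p_infty) (Rbar_locally m_infty).
Proof.
  intros Hx P [N HN]. set (c := x * (ln (2 * x) - 1)).
  exists (Rmax 1 (2 * (c - N))). intros t Ht. apply HN.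
  pose proof (Rmax_l 1 (2 * (c - N))). pose proof (Rmax_r 1 (2 * (c - N))).
  pose proof (mul_ln_le x t Hx ltac:(lra)). unfold c in *. lra.
Qed.

Definition Gamma_integrand (x t : R) : R := Rpower t (x - 1) * exp (- t).

Lemma Gamma_integrand_pos x t : 0 < Gamma_integrand x t.
Proof. apply Rmult_lt_0_compat; apply exp_pos. Qed.

Lemma Gamma_integrand_continuous x t : 0 < t -> continuous (Gamma_integrand x) t.
Proof.
  intros Ht. apply (@ex_derive_continuous R_AbsRing R_NormedModule).
  unfold Gamma_integrand, Rpower. auto_derive. lra.
Qed.

Lemma ex_RInt_Gamma_integrand x a b : 0 < a -> 0 < b -> ex_RInt (Gamma_integrand x) a b.
Proof.
  intros Ha Hb. apply (@ex_RInt_continuous R_CompleteNormedModule).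
  intros t Ht. apply Gamma_integrand_continuous.
  assert (0 < Rmin a b) by (apply Rmin_glb_lt; lra). lra.
Qed.

(* Compare with t^(x-1) on (0, 1] and with exp (c - t/2) on [1, oo), c as in mul_ln_le. *)
Lemma RInt_Gamma_integrand_bounded x : 0 < x ->
  exists B, forall e M, 0 < e <= 1 -> 1 <= M -> RInt (Gamma_integrand x) e M <= B.
Proof.
  intros Hx. set (c := x * (ln (2 * x) - 1)).
  exists (1 / x + 2 * exp (c - 1 / 2)). intros e M He HM.
  rewrite <- (RInt_Chasles _ e 1 M) by (apply ex_RInt_Gamma_integrand; lra).
  assert (Hnear0 : RInt (Gamma_integrand x) e 1 <= 1 / x - exp (x * ln e) / x).
  { replace (1 / x) with (exp (x * ln 1) / x) by (rewrite ln_1, Rmult_0_r, exp_0; reflexivity).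
    apply (RInt_le_antiderivative _ (fun t => exp ((x - 1) * ln t))
                                    (fun t => exp (x * ln t) / x)); try lra.
    - apply ex_RInt_Gamma_integrand; lra.
    - intros t Ht. auto_derive; [lra |].
      replace ((x - 1) * ln t) with (x * ln t + - ln t) by ring.
      rewrite exp_plus, exp_Ropp, exp_ln by lra. field. lra.
    - intros t Ht. apply (@ex_derive_continuous R_AbsRing R_NormedModule). auto_derive. lra.
    - intros t Ht. unfold Gamma_integrand, Rpower.
      rewrite <- (Rmult_1_r (exp ((x - 1) * ln t))) at 2.
      apply Rmult_le_compat_l; [left; apply exp_pos |].
      rewrite <- exp_0. apply exp_le_compat. lra. }
  assert (Hnearoo : RInt (Gamma_integrand x) 1 M
                    <= -2 * exp (c - M / 2) - -2 * exp (c - 1 / 2)).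
  { apply (RInt_le_antiderivative _ (fun t => exp (c - t / 2))
                                    (fun t => -2 * exp (c - t / 2))); try lra.
    - apply ex_RInt_Gamma_integrand; lra.
    - intros t Ht. auto_derive; [auto | unfold Rminus, Rdiv; field].
    - intros t Ht. apply (@ex_derive_continuous R_AbsRing R_NormedModule). auto_derive. auto.
    - intros t Ht. unfold Gamma_integrand, Rpower. rewrite <- exp_plus. apply exp_le_compat.
      assert (0 <= ln t) by (rewrite <- ln_1; apply ln_le; lra).
      pose proof (mul_ln_le x t Hx ltac:(lra)). unfold c. nra. }
  pose proof (exp_pos (x * ln e)). pose proof (exp_pos (c - M / 2)).
  assert (0 < exp (x * ln e) / x) by (apply Rdiv_lt_0_compat; lra).
  unfold plus; simpl. lra.
Qed.

Lemma is_RInt_gen_Gamma x : 0 < x ->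
  is_RInt_gen (Gamma_integrand x) (at_right 0) (Rbar_locally p_infty) (Gamma x).
Proof.
  intros Hx. destruct (RInt_Gamma_integrand_bounded x Hx) as [B HB].
  destruct (is_RInt_gen_nonneg_bounded (Gamma_integrand x)) with B as (l & Hl & _); auto.
  - intros t _. left. apply Gamma_integrand_pos.
  - intros a b Ha Hb. apply ex_RInt_Gamma_integrand; auto.
  - replace (Gamma x) with l; auto. symmetry. exact (is_RInt_gen_unique _ _ Hl).
Qed.

Lemma Gamma_pos x : 0 < x -> 0 < Gamma x.
Proof.
  intros Hx. destruct (RInt_Gamma_integrand_bounded x Hx) as [B HB].
  destruct (is_RInt_gen_nonneg_bounded (Gamma_integrand x)) with B as (l & Hl & Hsup); auto.
  - intros t _. left. apply Gamma_integrand_pos.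
  - intros a b Ha Hb. apply ex_RInt_Gamma_integrand; auto.
  - replace (Gamma x) with l by (symmetry; exact (is_RInt_gen_unique _ _ Hl)).
    apply Rlt_le_trans with (RInt (Gamma_integrand x) 1 2); [| apply Hsup; lra].
    apply RInt_gt_0; [lra | intros; apply Gamma_integrand_pos |].
    intros t Ht. apply Gamma_integrand_continuous. lra.
Qed.

Lemma Gamma_succ x : 0 < x -> Gamma (x + 1) = x * Gamma x.
Proof.
  intros Hx. set (F t := exp (x * ln t - t)).
  assert (HF : forall t, 0 < t ->
            is_derive F t (x * Gamma_integrand x t - Gamma_integrand (x + 1) t)).
  { intros t Ht. unfold F, Gamma_integrand, Rpower. auto_derive; [lra |].
    replace (x + 1 - 1) with x by ring.
    replace ((x - 1) * ln t) with (x * ln t + - ln t) by ring.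
    unfold Rminus. rewrite !exp_plus, (exp_Ropp (ln t)), exp_ln by lra. field. lra. }
  assert (Hcont : forall t, 0 < t ->
            continuous (fun t => x * Gamma_integrand x t - Gamma_integrand (x + 1) t) t).
  { intros t Ht. apply (@ex_derive_continuous R_AbsRing R_NormedModule).
    unfold Gamma_integrand, Rpower. auto_derive. lra. }
  assert (Hparts := is_RInt_gen_derive_0_p_infty _ F 0 0 HF Hcont
          (filterlim_exp_m_infty _ _ (lim_mul_ln_minus_at_0 x Hx))
          (filterlim_exp_m_infty _ _ (lim_mul_ln_minus_at_p_infty x Hx))).
  assert (Hlin := is_RInt_gen_minus _ _ _ _
                    (is_RInt_gen_scal _ x _ (is_RInt_gen_Gamma x Hx))
                    (is_RInt_gen_Gamma (x + 1) ltac:(lra))).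
  pose proof (eq_trans (eq_sym (is_RInt_gen_unique _ _ Hlin))
                       (is_RInt_gen_unique _ _ Hparts)) as E.
  unfold minus, plus, opp, scal in E; simpl in E. unfold mult in E; simpl in E. lra.
Qed.

Fixpoint rising (y : R) (n : nat) : R :=
  match n with
  | O => 1
  | S m => rising y m * (y + INR m)
  end.

Lemma rising_pos y n : 0 < y -> 0 < rising y n.
Proof.
  intros Hy. induction n as [|n IH]; simpl; [lra |].
  apply Rmult_lt_0_compat; [exact IH |]. pose proof (pos_INR n). lra.
Qed.

Lemma rising_succ_l y n : rising y (S n) = y * rising (y + 1) n.
Proof.
  induction n as [|n IH]; [simpl; ring |].
  change (rising y (S (S n))) with (rising y (S n) * (y + INR (S n))).
  rewrite IH. simpl rising. rewrite S_INR. ring.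
Qed.

Lemma Gamma_add_nat y n : 0 < y -> Gamma (y + INR n) = rising y n * Gamma y.
Proof.
  intros Hy. induction n as [|n IH]; simpl rising.
  - rewrite Rplus_0_r. ring.
  - rewrite S_INR, <- Rplus_assoc, Gamma_succ, IH by (pose proof (pos_INR n); lra). ring.
Qed.

Lemma C_pos n k : 0 < Binomial.C n k.
Proof.
  unfold Binomial.C. pose proof (INR_fact_lt_0 n). pose proof (INR_fact_lt_0 k).
  pose proof (INR_fact_lt_0 (n - k)). apply Rdiv_lt_0_compat, Rmult_lt_0_compat; auto.
Qed.

Lemma C_mul_C_minus k n j : (j <= n)%nat -> (n <= k)%nat ->
  Binomial.C k j * Binomial.C (k - j) (k - n) = Binomial.C k n * Binomial.C n j.
Proof.
  intros Hjn Hnk. unfold Binomial.C.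
  replace (k - j - (k - n))%nat with (n - j)%nat by lia.
  pose proof (INR_fact_neq_0 k). pose proof (INR_fact_neq_0 j).
  pose proof (INR_fact_neq_0 (k - j)). pose proof (INR_fact_neq_0 (k - n)).
  pose proof (INR_fact_neq_0 (n - j)). pose proof (INR_fact_neq_0 n).
  field. auto.
Qed.

Definition alt_rising_term (x : R) (n j : nat) : R :=
  (-1) ^ (n - j) * Binomial.C n j * (x + INR n - 2 * INR j) / rising (x - INR j) (S n).

Lemma sum_alt_rising_term_partial x n m : INR n < x -> (m <= n)%nat ->
  sum_f_R0 (alt_rising_term x (S n)) m
  = (-1) ^ (S n - m) * Binomial.C n m / rising (x - INR m) (S n).
Proof.
  intros Hx. induction m as [|m IH]; intros Hm.
  - simpl sum_f_R0. unfold alt_rising_term. rewrite !Nat.sub_0_r, !C_n_0.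
    change (rising (x - INR 0) (S (S n)))
      with (rising (x - INR 0) (S n) * (x - INR 0 + INR (S n))).
    simpl (INR 0). rewrite Rminus_0_r.
    assert (0 < rising x (S n)) by (apply rising_pos; pose proof (pos_INR n); lra).
    rewrite S_INR. field. pose proof (pos_INR n). lra.
  - rewrite tech5, IH by lia. unfold alt_rising_term.
    assert (Hmn : INR (S m) <= INR n) by (apply le_INR; lia).
    set (z := x - INR (S m)).
    replace (x - INR m) with (z + 1) by (unfold z; rewrite S_INR; ring).
    assert (Hz : 0 < z) by (unfold z; lra).
    assert (Hrise : rising z (S (S n)) = z * rising (z + 1) (S n)) by apply rising_succ_l.
    change (rising z (S (S n))) with (rising z (S n) * (z + INR (S n))) in Hrise |- *.
    assert (Hzn : 0 < z + INR (S n)) by (pose proof (pos_INR (S n)); lra).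
    assert (Hrise' : rising z (S n) = z * rising (z + 1) (S n) / (z + INR (S n))).
    { rewrite <- Hrise. field. lra. }
    rewrite Hrise, Hrise'.
    replace (S n - m)%nat with (S (S n - S m)) by lia.
    rewrite <- (pascal n m), (pascal_step3 n m) by lia.
    assert (0 < rising (z + 1) (S n)) by (apply rising_pos; lra).
    rewrite minus_INR by lia. unfold z in *. rewrite !S_INR in *. simpl pow.
    field. pose proof (pos_INR m). repeat split; lra.
Qed.

Lemma sum_alt_rising_term x n : (1 <= n)%nat -> INR n < x ->
  sum_f_R0 (alt_rising_term x n) n = 0.
Proof.
  intros Hn Hx. destruct n as [|n]; [lia |].
  (* The last term is added by hand: [Binomial.C n (S n)] is not 0 in Stdlib, so the
     partial-sum formula does not extend to it. *)
  rewrite tech5, sum_alt_rising_term_partial by (auto; rewrite S_INR in Hx; lra).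
  unfold alt_rising_term. rewrite !Nat.sub_diag, !C_n_n.
  replace (S n - n)%nat with 1%nat by lia.
  rewrite (rising_succ_l (x - INR (S n)) (S n)).
  replace (x - INR (S n) + 1) with (x - INR n) by (rewrite S_INR; ring).
  assert (0 < rising (x - INR n) (S n)) by (apply rising_pos; rewrite S_INR in Hx; lra).
  simpl pow. rewrite S_INR in *. field. split; lra.
Qed.

Lemma satisfies_rec_unique (c b d : nat -> nat -> R) :
  satisfies_rec c b -> satisfies_rec c d ->
  forall k j, (j <= k)%nat -> b k j = d k j.
Proof.
  intros Hb Hd k j. induction j as [j IH] using lt_wf_ind. intros Hjk.
  destruct j as [|i].
  - rewrite (proj1 (Hb k)), (proj1 (Hd k)). reflexivity.
  - rewrite (proj2 (Hb k) i Hjk), (proj2 (Hd k) i Hjk). f_equal.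
    apply sum_eq. intros j Hj. rewrite IH by lia. reflexivity.
Qed.

(* [a_coef alpha] and [ahat_coef alpha] are [a_gen alpha 1] and [a_gen alpha 2] up to
   conversion. *)
Definition a_gen (alpha s : R) (k j : nat) : R :=
  (-1) ^ (k - j) * Binomial.C k j *
  (Gamma (2 * alpha + INR k + INR j + 2) * Gamma (2 * alpha + INR k + 2)
     * Gamma (alpha + INR k + s))
  / (Gamma (2 * alpha + 2 * INR k + 2) * Gamma (2 * alpha + INR j + 2)
     * Gamma (alpha + INR j + s)).

Definition b_gen (alpha s : R) (k j : nat) : R :=
  Binomial.C k j *
  (Gamma (2 * alpha + INR k + 2) * Gamma (alpha + INR k + s)
     * Gamma (2 * alpha + 2 * INR k + 3 - 2 * INR j))
  / (Gamma (2 * alpha + INR k + 2 - INR j) * Gamma (alpha + INR k + s - INR j)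
     * Gamma (2 * alpha + 2 * INR k + 3 - INR j)).

Section Coefficients.

Variables alpha s : R.
Hypothesis Halpha : -1 < alpha.
Hypothesis Hs : 0 < alpha + s.

Let Gamma_neq_0 y : 0 < y -> Gamma y <> 0.
Proof. intros Hy. apply Rgt_not_eq, Gamma_pos, Hy. Qed.

Lemma a_gen_diag m : a_gen alpha s m m = 1.
Proof.
  unfold a_gen. rewrite Nat.sub_diag, C_n_n. pose proof (pos_INR m).
  replace (2 * alpha + INR m + INR m + 2) with (2 * alpha + 2 * INR m + 2) by ring.
  simpl pow. field. repeat split; apply Gamma_neq_0; lra.
Qed.

Lemma b_gen_0 k : b_gen alpha s k 0 = 1.
Proof.
  unfold b_gen. rewrite C_n_0. simpl (INR 0). pose proof (pos_INR k).
  rewrite !Rmult_0_r, !Rminus_0_r. field. repeat split; apply Gamma_neq_0; lra.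
Qed.

Lemma b_gen_mul_a_gen k n j : (j <= n)%nat -> (n <= k)%nat ->
  b_gen alpha s k j * a_gen alpha s (k - j) (k - n)
  = alt_rising_term (2 * alpha + 2 * INR k + 2 - INR n) n j *
    (Binomial.C k n * (Gamma (2 * alpha + INR k + 2) * Gamma (alpha + INR k + s))
     / (Gamma (2 * alpha + (INR k - INR n) + 2) * Gamma (alpha + (INR k - INR n) + s))).
Proof.
  intros Hjn Hnk. unfold b_gen, a_gen, alt_rising_term.
  replace (k - j - (k - n))%nat with (n - j)%nat by lia.
  assert (Hbin : Binomial.C (k - j) (k - n)
                 = Binomial.C k n * Binomial.C n j / Binomial.C k j).
  { rewrite <- C_mul_C_minus by lia. pose proof (C_pos k j). field. lra. }
  rewrite Hbin, !minus_INR by lia.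
  assert (Hj : 0 <= INR j) by apply pos_INR.
  assert (Hjn' : INR j <= INR n) by (apply le_INR; lia).
  assert (Hnk' : INR n <= INR k) by (apply le_INR; lia).
  set (u := INR k) in *. set (v := INR j) in *. set (w := INR n) in *.
  assert (G1 : Gamma (2 * alpha + 2 * u + 3 - 2 * v)
               = (2 * alpha + 2 * (u - v) + 2) * Gamma (2 * alpha + 2 * (u - v) + 2)).
  { rewrite <- Gamma_succ by lra. f_equal. ring. }
  assert (G2 : Gamma (2 * alpha + 2 * u + 3 - v)
               = rising (2 * alpha + 2 * u + 2 - w - v) (S n)
                 * Gamma (2 * alpha + (u - v) + (u - w) + 2)).
  { replace (2 * alpha + (u - v) + (u - w) + 2) with (2 * alpha + 2 * u + 2 - w - v) by ring.
    rewrite <- Gamma_add_nat by lra. f_equal. rewrite S_INR. unfold w. ring. }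
  rewrite G1, G2.
  replace (2 * alpha + u + 2 - v) with (2 * alpha + (u - v) + 2) by ring.
  replace (alpha + u + s - v) with (alpha + (u - v) + s) by ring.
  assert (0 < rising (2 * alpha + 2 * u + 2 - w - v) (S n)) by (apply rising_pos; lra).
  pose proof (C_pos k j).
  field. repeat split; try apply Gamma_neq_0; lra.
Qed.

Lemma sum_b_gen_mul_a_gen k n : (1 <= n)%nat -> (n <= k)%nat ->
  sum_f_R0 (fun j => b_gen alpha s k j * a_gen alpha s (k - j) (k - n)) n = 0.
Proof.
  intros Hn Hnk.
  rewrite (sum_eq _ _ n (fun j Hj => b_gen_mul_a_gen k n j Hj Hnk)).
  rewrite <- scal_sum, sum_alt_rising_term by (auto; apply le_INR in Hnk; lra). ring.
Qed.

Lemma b_gen_satisfies_rec : satisfies_rec (a_gen alpha s) (b_gen alpha s).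
Proof.
  intros k. split; [apply b_gen_0 |]. intros i Hi.
  pose proof (sum_b_gen_mul_a_gen k (S i) ltac:(lia) Hi) as Hsum.
  rewrite tech5, a_gen_diag, Rmult_1_r in Hsum. lra.
Qed.

End Coefficients.

Theorem mainTheorem4 (alpha : R) (Halpha : -1 < alpha)
  (b bhat : nat -> nat -> R)
  (Hb : satisfies_rec (a_coef alpha) b)
  (Hbhat : satisfies_rec (ahat_coef alpha) bhat) :
  forall k j : nat, (j <= k)%nat ->
    b k j =
      Binomial.C k j *
      (Gamma (2 * alpha + INR k + 2) * Gamma (alpha + INR k + 1)
         * Gamma (2 * alpha + 2 * INR k + 3 - 2 * INR j))
      / (Gamma (2 * alpha + INR k + 2 - INR j) * Gamma (alpha + INR k + 1 - INR j)
         * Gamma (2 * alpha + 2 * INR k + 3 - INR j))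
    /\
    bhat k j =
      Binomial.C k j *
      (Gamma (2 * alpha + INR k + 2) * Gamma (alpha + INR k + 2)
         * Gamma (2 * alpha + 2 * INR k + 3 - 2 * INR j))
      / (Gamma (2 * alpha + INR k + 2 - INR j) * Gamma (alpha + INR k + 2 - INR j)
         * Gamma (2 * alpha + 2 * INR k + 3 - INR j)).
Proof.
  intros k j Hjk. split.
  - exact (satisfies_rec_unique _ _ _ Hb
             (b_gen_satisfies_rec alpha 1 Halpha ltac:(lra)) k j Hjk).
  - exact (satisfies_rec_unique _ _ _ Hbhat
             (b_gen_satisfies_rec alpha 2 Halpha ltac:(lra)) k j Hjk).
Qed.
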